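(* Let $\boldsymbol{M}$ be a weight sequence satisfying $\operatorname{(sm)}$ with constants $C_0>0$, $H>1$ (i.e. $\log(m_{p+1}/m_p)\le C_0H^{p+1}$ for all $p\in\mathbb{N}_0$). Then for every $h>0$ one has $\mathcal{L}(C_{\boldsymbol{M},h}(0,\infty))\subset\mathcal{A}_{\boldsymbol{M}_{+1},Hh}(\mathbb{H})$, and $\mathcal{L}\colon C_{\boldsymbol{M},h}(0,\infty)\to\mathcal{A}_{\boldsymbol{M}_{+1},Hh}(\mathbb{H})$ is continuous. Consequently, $\mathcal{L}\colon C_{\{\boldsymbol{M}\}}(0,\infty)\to\mathcal{A}_{\{\boldsymbol{M}_{+1}\}}(\mathbb{H})$ is well-defined and continuous; moreover, it is injective.
   Context: Sequences are of positive reals indexed by $\mathbb{N}_0$; $m_p=M_{p+1}/M_p$. Weight sequence: $M_0=1$, $M_p^2\le M_{p-1}M_{p+1}$ ($p\ge1$), $m_p\to\infty$. $\boldsymbol{M}_{+1}=(M_{p+1})_p$. $\mathbb{H}$ is the open upper half-plane. For a sequence $\boldsymbol{N}$ and $h>0$, $\mathcal{A}_{\boldsymbol{N},h}(\mathbb{H})$ is the Banach space of holomorphic $f$ on $\mathbb{H}$ with norm $\sup_p\sup_{z\in\mathbb{H}}|f^{(p)}(z)|/(h^pN_p)<\infty$, and $\mathcal{A}_{\{\boldsymbol{N}\}}(\mathbb{H})=\bigcup_h\mathcal{A}_{\boldsymbol{N},h}(\mathbb{H})$ (inductive limit). $C_{\boldsymbol{M},h}(0,\infty)$ is the Banach space of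 continuous $\varphi$ on $(0,\infty)$ with norm $\sup_p\sup_{x>0}x^p|\varphi(x)|/(h^pM_p)<\infty$ (no support condition), $C_{\{\boldsymbol{M}\}}(0,\infty)=\bigcup_hC_{\boldsymbol{M},h}(0,\infty)$ (inductive limit). The Laplace transform is $\mathcal{L}(\varphi)(\zeta)=\int_0^\infty\varphi(x)e^{ix\zeta}\,dx$, $\zeta\in\overline{\mathbb{H}}$, considered on $\mathbb{H}$. *)

From Stdlib Require Import Reals.
From Coquelicot Require Import Coquelicot.
Open Scope R_scope.

Definition mq (M : nat -> R) (p : nat) : R := M (S p) / M p.

Definition weight_seq (M : nat -> R) : Prop :=
  (forall p, 0 < M p) /\ M 0%nat = 1 /\
  (forall p, (1 <= p)%nat -> (M p) ^ 2 <= M (p - 1)%nat * M (S p)) /\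
  is_lim_seq (mq M) p_infty.

Definition cond_sm (M : nat -> R) (C0 H : R) : Prop :=
  forall p : nat, ln (mq M (S p) / mq M p) <= C0 * H ^ (S p).

Definition shift1 (M : nat -> R) : nat -> R := fun p => M (S p).

Definition upper (z : C) : Prop := 0 < Im z.

Definition cexp (z : C) : C := (exp (Re z) * cos (Im z), exp (Re z) * sin (Im z)).

(* phi continuous on (0,oo) and  x^p |phi x| <= B h^p M_p  for all p, x > 0;
   the least such B is the norm of phi in C_{M,h}(0,oo). *)
Definition CMh_bound (M : nat -> R) (h : R) (phi : R -> C) (B : R) : Prop :=
  (forall x, 0 < x -> continuous phi x) /\
  forall (p : nat) (x : R), 0 < x -> x ^ p * Cmod (phi x) <= B * h ^ p * M p.

Definition in_CMh (M : nat -> R) (h : R) (phi : R -> C) : Prop :=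
  exists B, CMh_bound M h phi B.

Definition in_CM (M : nat -> R) (phi : R -> C) : Prop :=
  exists h, 0 < h /\ in_CMh M h phi.

Definition lap_integrand (phi : R -> C) (zeta : C) : R -> C :=
  fun x => Cmult (phi x) (cexp (Cmult (Cmult Ci (RtoC x)) zeta)).

Definition Laplace (phi : R -> C) (zeta : C) : C :=
  @RInt_gen C_R_CompleteNormedModule (lap_integrand phi zeta) (at_right 0) (Rbar_locally p_infty).

Definition Laplace_defined (phi : R -> C) : Prop :=
  forall zeta, upper zeta ->
    @ex_RInt_gen C_R_NormedModule (lap_integrand phi zeta) (at_right 0) (Rbar_locally p_infty).

Definition derivs_on (U : C -> Prop) (f : C -> C) (g : nat -> C -> C) : Prop :=
  (forall z, U z -> g 0%nat z = f z) /\
  (forall (n : nat) (z : C), U z ->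
     @is_derive C_AbsRing C_NormedModule (g n) z (g (S n) z)).

Definition in_ANh (N : nat -> R) (h : R) (f : C -> C) : Prop :=
  exists g : nat -> C -> C, derivs_on upper f g /\
    exists B, forall (p : nat) (z : C), upper z -> Cmod (g p z) <= B * h ^ p * N p.

Definition in_AN (N : nat -> R) (f : C -> C) : Prop :=
  exists h, 0 < h /\ in_ANh N h f.

(* Differentiating under the integral sign, the p-th derivative of L(phi) is
   int_0^oo (i t)^p phi(t) e^(i t zeta) dt.  The bounds t^q |phi(t)| <= B h^q M_q for
   q = p, p + 1, p + 2 combine into t^p |phi(t)| <= 3 B h^(p+1) M_(p+1) b / ((t + a) (t + b)) with
   a = h m_p and b = 2 h m_(p+1), whose integral over (0, oo) is at most
   6 B h^(p+1) M_(p+1) log (2 m_(p+1) / m_p); condition (sm) bounds the logarithm by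
   (1 + C0 H) H^p.  The same majorant, applied to the Taylor remainder of the exponential,
   justifies the differentiation.
   For injectivity, at zeta = i k / x0 the k-th derivative of L(phi) is a nonzero multiple of
   int_0^oo (t / x0 e^(1 - t / x0))^k phi(t) dt.  The kernel t / x0 e^(1 - t / x0) is at most 1,
   with equality only at x0, so its powers concentrate at x0 and continuity of phi gives
   phi(x0) = 0 when L(phi) vanishes. *)

From Stdlib Require Import Reals Lra Lia Psatz.
From Coquelicot Require Import Coquelicot.
Open Scope R_scope.

Lemma continuous_C_iff {U : UniformSpace} (f : U -> C) (x : U) :
  @continuous U C_UniformSpace f x <-> @continuous U (AbsRing_UniformSpace C_AbsRing) f x.
Proof.
  split; intros Hf P HP; apply Hf; apply locally_C; exact HP.
Qed.

Lemma continuous_Cmult {U : UniformSpace} (f g : U -> C) (x : U) :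
  continuous f x -> continuous g x -> continuous (fun t => Cmult (f t) (g t)) x.
Proof.
  rewrite !continuous_C_iff. apply (continuous_mult (K := C_AbsRing)).
Qed.

Lemma continuous_Cminus {U : UniformSpace} (f g : U -> C) (x : U) :
  continuous f x -> continuous g x -> continuous (fun t => Cminus (f t) (g t)) x.
Proof. apply (continuous_minus (V := C_R_NormedModule)). Qed.

Lemma continuous_pair_C {U : UniformSpace} (f : U -> C) (x : U) :
  continuous (fun t => fst (f t)) x -> continuous (fun t => snd (f t)) x ->
  continuous f x.
Proof.
  intros H1 H2. apply filterlim_locally. intros eps.
  apply filterlim_locally with (eps := eps) in H1.
  apply filterlim_locally with (eps := eps) in H2.
  generalize (filter_and _ _ H1 H2). apply filter_imp. intros t Ht. exact Ht.
Qed.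

Lemma continuous_RtoC {U : UniformSpace} (f : U -> R) (x : U) :
  continuous f x -> continuous (fun t => RtoC (f t)) x.
Proof.
  intros Hf. apply continuous_pair_C; [exact Hf | apply continuous_const].
Qed.

Lemma continuous_Cpow {U : UniformSpace} (f : U -> C) (n : nat) (x : U) :
  continuous f x -> continuous (fun t => Cpow (f t) n) x.
Proof.
  intros Hf. induction n as [|n IH]; [apply continuous_const |].
  apply continuous_Cmult; assumption.
Qed.

Lemma continuous_pow {U : UniformSpace} (f : U -> R) (k : nat) (x : U) :
  continuous f x -> continuous (fun t => f t ^ k) x.
Proof.
  intros Hf. induction k as [|k IH]; [apply continuous_const |].
  apply (continuous_mult (K := R_AbsRing)); assumption.
Qed.

Lemma continuous_Cmod_delta (psi : R -> C) (x0 eps : R) : continuous psi x0 -> 0 < eps ->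
  exists delta, 0 < delta /\ forall t, Rabs (t - x0) < delta -> Cmod (psi t - psi x0) < eps.
Proof.
  intros Hc Heps. apply continuous_C_iff in Hc.
  destruct (proj1 (filterlim_locally _ _) Hc (mkposreal eps Heps)) as [d Hd].
  exists d. split; [apply cond_pos |]. intros t Ht. exact (Hd t Ht).
Qed.

Lemma exp_le_compat (x y : R) : x <= y -> exp x <= exp y.
Proof. intros [H | ->]; [left; apply exp_increasing; exact H | right; reflexivity]. Qed.

Lemma exp_pow (a : R) (k : nat) : exp a ^ k = exp (INR k * a).
Proof.
  induction k as [|k IH]; [simpl; rewrite Rmult_0_l, exp_0; reflexivity |].
  rewrite S_INR. simpl. rewrite IH, <- exp_plus. f_equal. ring.
Qed.

Lemma ln_le_sub_1 (y : R) : 0 < y -> ln y <= y - 1.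
Proof. intros Hy. generalize (exp_ineq1_le (ln y)). rewrite exp_ln by exact Hy. lra. Qed.

Lemma pow_le_base (r : R) (k : nat) : 0 <= r <= 1 -> (1 <= k)%nat -> r ^ k <= r.
Proof.
  intros Hr Hk. destruct k as [|k]; [lia |]. simpl.
  assert (r ^ k <= 1) by (rewrite <- (pow1 k); apply pow_incr; lra).
  assert (0 <= r ^ k) by (apply pow_le; lra). nra.
Qed.

Lemma exists_pow_ratio_small (r s K c : R) : 0 < r < s -> 0 <= K -> 0 < c ->
  exists k : nat, (1 <= k)%nat /\ K * r ^ (k - 1) <= c * s ^ k.
Proof.
  intros Hrs HK Hc.
  assert (Hq : 0 < r / s < 1) by (split; [apply Rdiv_lt_0_compat | apply Rlt_div_l]; lra).
  assert (Htgt : 0 < c * r / (K + 1)) by (apply Rdiv_lt_0_compat; nra).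
  destruct (pow_lt_1_zero (r / s) ltac:(rewrite Rabs_right; lra) _ Htgt) as [N HN].
  exists (S N). split; [lia |].
  assert (HqN := HN (S N) ltac:(lia)). rewrite Rabs_right in HqN by (apply Rle_ge, pow_le; lra).
  rewrite Nat.sub_succ, Nat.sub_0_r. simpl in HqN |- *.
  assert (HqN' : (r / s) ^ N * (K + 1) < c * s).
  { apply Rlt_div_r; [lra |]. apply (Rmult_lt_reg_l (r / s)); [lra |].
    replace (r / s * (c * s / (K + 1))) with (c * r / (K + 1)) by (field; lra). exact HqN. }
  replace (r ^ N) with ((r / s) ^ N * s ^ N) by (rewrite <- Rpow_mult_distr; f_equal; field; lra).
  assert (0 <= (r / s) ^ N) by (apply pow_le; lra).
  assert (0 <= s ^ N) by (apply pow_le; lra).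
  nra.
Qed.

Lemma Rabs_sin_le (b : R) : Rabs (sin b) <= Rabs b.
Proof.
  assert (Hpos : forall x, 0 <= x -> Rabs (sin x) <= x).
  { intros x Hx. destruct (Rle_lt_dec 1 x).
    - generalize (SIN_bound x); intros. apply Rabs_le; lra.
    - destruct (Req_dec x 0) as [->|Hne]; [rewrite sin_0, Rabs_R0; lra |].
      assert (0 < sin x) by (apply sin_gt_0; generalize PI2_1; lra).
      assert (sin x < x) by (apply sin_lt_x; lra).
      rewrite Rabs_right; lra. }
  destruct (Rle_dec 0 b).
  - rewrite (Rabs_right b) by lra. auto.
  - rewrite (Rabs_left b) by lra. rewrite <- (Ropp_involutive b) at 1.
    rewrite sin_neg, Rabs_Ropp. apply Hpos; lra.
Qed.

Lemma Rabs_cos_sub_1 (c : R) : Rabs (cos c - 1) <= c ^ 2 / 2.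
Proof.
  replace c with (2 * (c / 2)) at 1 by field. rewrite cos_2a_sin.
  assert (H := Rabs_sin_le (c / 2)).
  assert (Hsq : sin (c / 2) ^ 2 <= (c / 2) ^ 2).
  { rewrite <- (pow2_abs (sin _)), <- (pow2_abs (c / 2)).
    apply pow_incr. split; [apply Rabs_pos | exact H]. }
  rewrite Rabs_left1; nra.
Qed.

Lemma Rabs_sin_sub_id (b : R) : Rabs (sin b - b) <= 2 * b ^ 2.
Proof.
  assert (Hb2 : Rabs b ^ 2 = b ^ 2) by apply pow2_abs.
  destruct (Rle_lt_dec 1 (Rabs b)).
  - generalize (SIN_bound b); intros.
    assert (Rabs (sin b) <= 1) by (apply Rabs_le; lra).
    eapply Rle_trans; [apply Rabs_triang |]. rewrite Rabs_Ropp. nra.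
  - destruct (MVT_gen (fun t => sin t - t) 0 b (fun t => cos t - 1)) as [c [Hc E]].
    + intros x _. auto_derive; [exact I | ring].
    + intros x _. apply continuity_pt_minus; [apply continuity_sin | apply continuity_pt_id].
    + rewrite sin_0, !Rminus_0_r in E. rewrite E, Rabs_mult.
      assert (Hcb : Rabs c <= Rabs b).
      { destruct (Rle_dec 0 b).
        - rewrite Rmin_left, Rmax_right in Hc by lra. rewrite !Rabs_right; lra.
        - rewrite Rmin_right, Rmax_left in Hc by lra. rewrite !Rabs_left1; lra. }
      assert (Hc2 : c ^ 2 <= b ^ 2).
      { rewrite <- Hb2, <- (pow2_abs c). apply pow_incr. split; [apply Rabs_pos | exact Hcb]. }
      generalize (Rabs_cos_sub_1 c) (Rabs_pos b) (Rabs_pos (cos c - 1)). nra.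
Qed.

Lemma Rabs_exp_sub_1 (s : R) : Rabs (exp s - 1) <= Rabs s * exp (Rabs s).
Proof.
  assert (H1 := exp_ineq1_le s). assert (H2 := exp_ineq1_le (- s)).
  assert (E : exp s * exp (- s) = 1) by (rewrite <- exp_plus, Rplus_opp_r; apply exp_0).
  assert (0 < exp s) by apply exp_pos.
  destruct (Rle_dec 0 s).
  - rewrite (Rabs_right s), Rabs_right by lra. nra.
  - assert (exp s < 1) by (rewrite <- exp_0; apply exp_increasing; lra).
    rewrite (Rabs_left s), Rabs_left by lra. nra.
Qed.

Lemma Rabs_exp_taylor_1 (s : R) : Rabs (exp s - 1 - s) <= s ^ 2 * exp (Rabs s).
Proof.
  assert (H1 := exp_ineq1_le s). assert (H2 := exp_ineq1_le (- s)).
  assert (E : exp s * exp (- s) = 1) by (rewrite <- exp_plus, Rplus_opp_r; apply exp_0).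
  assert (0 < exp s) by apply exp_pos.
  rewrite Rabs_right by lra.
  destruct (Rle_dec 0 s).
  - rewrite (Rabs_right s) by lra.
    assert (exp s - 1 <= s * exp s) by nra. nra.
  - rewrite (Rabs_left s) by lra.
    assert (exp s * (1 - s) <= 1) by nra.
    assert (exp s - 1 - s <= s ^ 2) by nra. nra.
Qed.

Lemma cexp_plus (a b : C) : cexp (a + b)%C = (cexp a * cexp b)%C.
Proof.
  destruct a as [a1 a2], b as [b1 b2]. unfold cexp, Cplus, Cmult, Re, Im; simpl.
  rewrite exp_plus, cos_plus, sin_plus. f_equal; ring.
Qed.

Lemma cexp_RtoC (a : R) : cexp (RtoC a) = RtoC (exp a).
Proof. unfold cexp, RtoC, Re, Im; simpl. rewrite cos_0, sin_0. f_equal; ring. Qed.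

Lemma Cmod_cexp (u : C) : Cmod (cexp u) = exp (Re u).
Proof.
  destruct u as [s b]. unfold cexp, Cmod, Re, Im; cbn [fst snd].
  replace ((exp s * cos b) ^ 2 + (exp s * sin b) ^ 2)
    with (exp s ^ 2 * (sin b ^ 2 + cos b ^ 2)) by ring.
  rewrite <- !Rsqr_pow2, sin2_cos2, Rmult_1_r, sqrt_Rsqr; [reflexivity |].
  apply Rlt_le, exp_pos.
Qed.

Lemma Cmod_le_Rabs_Re_Im (z : C) : Cmod z <= Rabs (Re z) + Rabs (Im z).
Proof.
  unfold Cmod. rewrite <- (sqrt_pow2 (Rabs (Re z) + Rabs (Im z)))
    by (generalize (Rabs_pos (Re z)) (Rabs_pos (Im z)); lra).
  apply sqrt_le_1_alt. unfold Re, Im.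
  rewrite <- (pow2_abs (fst z)), <- (pow2_abs (snd z)).
  generalize (Rabs_pos (fst z)) (Rabs_pos (snd z)). nra.
Qed.

Lemma Cmod_cexp_taylor_1 (u : C) :
  Cmod (cexp u - 1 - u)%C <= 4 * Cmod u ^ 2 * exp (Cmod u).
Proof.
  destruct u as [s b].
  assert (Hs : Rabs s <= Cmod (s, b)) by apply (re_le_Cmod (s, b)).
  assert (Hb : Rabs b <= Cmod (s, b))
    by (generalize (Rmax_Cmod (s, b)) (Rmax_r (Rabs s) (Rabs b)); simpl; lra).
  assert (Hsb : Cmod (s, b) ^ 2 = s ^ 2 + b ^ 2)
    by (unfold Cmod; rewrite pow2_sqrt; simpl; nra).
  set (E := exp (Cmod (s, b))) in *.
  assert (HE1 : exp s <= E) by (apply exp_le_compat; generalize (Rle_abs s); lra).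
  assert (HE2 : exp (Rabs s) <= E) by (apply exp_le_compat; exact Hs).
  assert (Ep : 0 < exp s) by apply exp_pos.
  rewrite Hsb. eapply Rle_trans; [apply Cmod_le_Rabs_Re_Im |].
  unfold cexp, Cminus, Cplus, Copp, RtoC, Re, Im; cbn [fst snd].
  replace (exp s * cos b + - (1) + - s) with (exp s * (cos b - 1) + (exp s - 1 - s)) by ring.
  replace (exp s * sin b + - 0 + - b) with (exp s * (sin b - b) + b * (exp s - 1)) by ring.
  assert (C1 := Rabs_cos_sub_1 b). assert (S1 := Rabs_sin_sub_id b).
  assert (X1 := Rabs_exp_sub_1 s). assert (X2 := Rabs_exp_taylor_1 s).
  assert (R1 : Rabs (exp s * (cos b - 1) + (exp s - 1 - s)) <= E * (b ^ 2 / 2) + s ^ 2 * E).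
  { eapply Rle_trans; [apply Rabs_triang |]. rewrite Rabs_mult, (Rabs_right (exp s)) by lra.
    apply Rplus_le_compat; [apply Rmult_le_compat; try lra; apply Rabs_pos |].
    eapply Rle_trans; [exact X2 |]. apply Rmult_le_compat_l; [nra | lra]. }
  assert (R2 : Rabs (exp s * (sin b - b) + b * (exp s - 1))
               <= E * (2 * b ^ 2) + Rabs b * (Rabs s * E)).
  { eapply Rle_trans; [apply Rabs_triang |].
    rewrite !Rabs_mult, (Rabs_right (exp s)) by lra.
    apply Rplus_le_compat; [apply Rmult_le_compat; try lra; apply Rabs_pos |].
    apply Rmult_le_compat_l; [apply Rabs_pos |].
    eapply Rle_trans; [exact X1 |]. apply Rmult_le_compat_l; [apply Rabs_pos | lra]. }
  assert (Rabs b * Rabs s <= (b ^ 2 + s ^ 2) / 2).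
  { rewrite <- (pow2_abs b), <- (pow2_abs s). generalize (pow2_ge_0 (Rabs b - Rabs s)). nra. }
  assert (0 < E) by apply exp_pos.
  assert (Rabs b * (Rabs s * E) <= (b ^ 2 + s ^ 2) / 2 * E)
    by (rewrite <- Rmult_assoc; apply Rmult_le_compat_r; lra).
  nra.
Qed.

(** * Improper integrals over (0, +oo) *)

Notation is_RInt_0oo f l := (is_RInt_gen f (at_right 0) (Rbar_locally p_infty) l).

Lemma at_right_0_iff (P : R -> Prop) :
  at_right 0 P <-> exists d, 0 < d /\ forall x, 0 < x < d -> P x.
Proof.
  split.
  - intros [d Hd]. exists d. split; [apply cond_pos |]. intros x Hx. apply Hd; [| lra].
    change (Rabs (x - 0) < d). rewrite Rminus_0_r, Rabs_right; lra.
  - intros [d [Hd HP]]. exists (mkposreal d Hd). intros x Hx Hx0. apply HP. split; [exact Hx0 |].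
    change (Rabs (x - 0) < d) in Hx. rewrite Rminus_0_r in Hx. apply Rabs_def2 in Hx. lra.
Qed.

Lemma eventually_0oo (P : R -> R -> Prop) (d B : R) : 0 < d ->
  (forall a b, 0 < a < d -> B < b -> P a b) ->
  filter_prod (at_right 0) (Rbar_locally p_infty) (fun ab => P (fst ab) (snd ab)).
Proof.
  intros Hd HP. apply Filter_prod with (fun a => 0 < a < d) (fun b => B < b).
  - apply at_right_0_iff. exists d. split; [exact Hd | tauto].
  - exists B. tauto.
  - intros a b Ha Hb. apply HP; assumption.
Qed.

Lemma ex_RInt_continuous_0oo {V : CompleteNormedModule R_AbsRing} (f : R -> V) (a b : R) :
  (forall x, 0 < x -> continuous f x) -> 0 < a -> 0 < b -> ex_RInt f a b.
Proof.
  intros Hf Ha Hb. apply ex_RInt_continuous. intros z Hz. apply Hf.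
  destruct (Rle_dec a b); [rewrite Rmin_left in Hz | rewrite Rmin_right in Hz]; lra.
Qed.

Lemma RInt_close_0oo (g : R -> R) (Ig eps : R) : is_RInt_0oo g Ig -> 0 < eps ->
  exists a0 b0, 0 < a0 < b0 /\
    forall a b, 0 < a <= a0 -> b0 <= b -> Rabs (RInt g a b - Ig) < eps.
Proof.
  intros Hg Heps.
  destruct (Hg (ball Ig eps)) as [Q S HQ HS HQS]; [apply (locally_ball Ig (mkposreal _ Heps)) |].
  apply at_right_0_iff in HQ. destruct HQ as [d [Hd HQ]]. destruct HS as [B HB].
  exists (d / 2), (Rmax B (d / 2) + 1). split.
  { generalize (Rmax_r B (d / 2)). lra. }
  intros a b Ha Hb. destruct (HQS a b) as [y [Hy Hball]].
  - apply HQ. lra.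
  - apply HB. generalize (Rmax_l B (d / 2)). lra.
  - simpl in Hy. rewrite (is_RInt_unique _ _ _ _ Hy). exact Hball.
Qed.

Lemma norm_RInt_le_continuous {V : CompleteNormedModule R_AbsRing} (f : R -> V) (g : R -> R)
    (a b : R) : a <= b ->
  (forall x, a <= x <= b -> continuous f x) -> (forall x, a <= x <= b -> continuous g x) ->
  (forall x, a <= x <= b -> norm (f x) <= g x) -> norm (RInt f a b) <= RInt g a b.
Proof.
  intros Hab Hf Hg Hfg.
  assert (Hint : forall (W : CompleteNormedModule R_AbsRing) (h : R -> W),
            (forall x, a <= x <= b -> continuous h x) -> is_RInt h a b (RInt h a b)).
  { intros W h Hh. apply RInt_correct, ex_RInt_continuous. intros z Hz.
    rewrite Rmin_left, Rmax_right in Hz by lra. auto. }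
  apply (norm_RInt_le f g a b); [exact Hab | exact Hfg | apply Hint; exact Hf |].
  apply (Hint R_CompleteNormedModule); exact Hg.
Qed.

Lemma minus_plus_mid {G : AbelianGroup} (x y z : G) : minus (plus x (plus y z)) y = plus x z.
Proof.
  unfold minus.
  rewrite (plus_comm y z), plus_assoc, <- (plus_assoc (plus x z)), plus_opp_r, plus_zero_r.
  reflexivity.
Qed.

Lemma RInt_cvg_dominated_0oo {V : CompleteNormedModule R_AbsRing} (f : R -> V) (g : R -> R)
    (Ig : R) :
  (forall x, 0 < x -> continuous f x) -> (forall x, 0 < x -> continuous g x) ->
  (forall x, 0 < x -> norm (f x) <= g x) -> is_RInt_0oo g Ig ->
  exists l : V, filterlim (fun ab => RInt f (fst ab) (snd ab))
                  (filter_prod (at_right 0) (Rbar_locally p_infty)) (locally l).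
Proof.
  intros Hf Hg Hfg HIg.
  set (F := filter_prod (at_right 0) (Rbar_locally p_infty)).
  assert (HF : ProperFilter F) by apply filter_prod_proper.
  set (Fn := fun ab : R * R => RInt f (fst ab) (snd ab)).
  apply (proj1 (filterlim_locally_closely (F := F) (U := V) Fn)).
  apply (proj2 (filterlim_closely (F := F) Fn)). intros eps.
  destruct (RInt_close_0oo g Ig (eps / 4) HIg) as [a0 [b0 [[Ha0 Hb0] Hclose]]];
    [generalize (cond_pos eps); lra |].
  (* Against the reference interval [a0, b0], the tails of f are dominated by those of g. *)
  assert (Htail : forall a b, 0 < a < a0 -> b0 < b ->
            norm (minus (RInt f a b) (RInt f a0 b0)) < eps / 2).
  { intros a b Ha Hb.
    rewrite <- (RInt_Chasles f a a0 b), <- (RInt_Chasles f a0 b0 b)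
      by (apply ex_RInt_continuous_0oo; auto; lra).
    rewrite (@minus_plus_mid V).
    eapply Rle_lt_trans; [apply (@norm_triangle R_AbsRing V) |].
    assert (Hg1 := Hclose a b ltac:(lra) ltac:(lra)).
    assert (Hg2 := Hclose a0 b0 ltac:(lra) ltac:(lra)).
    rewrite <- (RInt_Chasles g a a0 b), <- (RInt_Chasles g a0 b0 b) in Hg1
      by (apply ex_RInt_continuous_0oo; auto; lra).
    assert (N1 := norm_RInt_le_continuous f g a a0 ltac:(lra)
      ltac:(intros; apply Hf; lra) ltac:(intros; apply Hg; lra) ltac:(intros; apply Hfg; lra)).
    assert (N2 := norm_RInt_le_continuous f g b0 b ltac:(lra)
      ltac:(intros; apply Hf; lra) ltac:(intros; apply Hg; lra) ltac:(intros; apply Hfg; lra)).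
    apply Rabs_def2 in Hg1. apply Rabs_def2 in Hg2. change plus with Rplus in Hg1. lra. }
  exists (fun ab => 0 < fst ab < a0 /\ b0 < snd ab). split.
  - apply (eventually_0oo (fun a b => 0 < a < a0 /\ b0 < b) a0 b0); [exact Ha0 | tauto].
  - intros [u1 u2] [v1 v2] [Hu1 Hu2] [Hv1 Hv2]. unfold Fn; simpl in *.
    replace (pos eps) with (eps / 2 + eps / 2) by field.
    apply ball_triangle with (RInt f a0 b0); [apply ball_sym |];
      apply (@norm_compat1 R_AbsRing V), Htail; assumption.
Qed.

Lemma is_RInt_0oo_dominated {V : CompleteNormedModule R_AbsRing} (f : R -> V) (g : R -> R)
    (Ig : R) :
  (forall x, 0 < x -> continuous f x) -> (forall x, 0 < x -> continuous g x) ->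
  (forall x, 0 < x -> norm (f x) <= g x) -> is_RInt_0oo g Ig ->
  exists l : V, is_RInt_0oo f l /\ norm l <= Ig.
Proof.
  intros Hf Hg Hfg HIg.
  destruct (RInt_cvg_dominated_0oo f g Ig Hf Hg Hfg HIg) as [l Hl].
  assert (Hfl : is_RInt_0oo f l).
  { intros P HP. unfold filtermapi.
    assert (HPl : filter_prod (at_right 0) (Rbar_locally p_infty)
                    (fun ab => P (RInt f (fst ab) (snd ab)))) by exact (Hl P HP).
    generalize (filter_and _ _ HPl
      (eventually_0oo (fun a b => 0 < a /\ 0 < b) 1 0 Rlt_0_1 ltac:(intros; lra))).
    apply filter_imp. intros [a b] [HPab [Ha Hb]]. exists (RInt f a b).
    split; [apply RInt_correct, ex_RInt_continuous_0oo |]; assumption. }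
  exists l. split; [exact Hfl |].
  apply (RInt_gen_norm (Fa := at_right 0) (Fb := Rbar_locally p_infty) f g l Ig);
    [| | exact Hfl | exact HIg].
  - apply (eventually_0oo (fun a b => a <= b) 1 1); [lra | intros; lra].
  - apply (eventually_0oo (fun a b => forall x, a <= x <= b -> norm (f x) <= g x) 1 1);
      [lra | intros a b Ha Hb x Hx; apply Hfg; lra].
Qed.

Lemma RInt_le_is_RInt_0oo (g : R -> R) (Ig c d : R) :
  (forall x, 0 < x -> continuous g x) -> (forall x, 0 < x -> 0 <= g x) ->
  is_RInt_0oo g Ig -> 0 < c <= d -> RInt g c d <= Ig.
Proof.
  intros Hg Hg0 HIg Hcd. apply le_epsilon. intros eps Heps.
  destruct (RInt_close_0oo g Ig eps HIg Heps) as [a0 [b0 [[Ha0 Hb0] Hclose]]].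
  set (a := Rmin a0 c). set (b := Rmax b0 d).
  assert (Ha : 0 < a) by (apply Rmin_pos; lra).
  assert (Hac : a <= c) by apply Rmin_r. assert (Hdb : d <= b) by apply Rmax_r.
  assert (Hexg : forall u v, 0 < u -> 0 < v -> ex_RInt g u v)
    by (intros; apply (ex_RInt_continuous_0oo (V := R_CompleteNormedModule)); assumption).
  assert (Hab := Hclose a b (conj Ha (Rmin_l a0 c)) (Rmax_l b0 d)).
  rewrite <- (RInt_Chasles g a c b), <- (RInt_Chasles g c d b) in Hab by (apply Hexg; lra).
  assert (0 <= RInt g a c) by (apply RInt_ge_0; [lra | apply Hexg; lra | intros; apply Hg0; lra]).
  assert (0 <= RInt g d b) by (apply RInt_ge_0; [lra | apply Hexg; lra | intros; apply Hg0; lra]).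
  apply Rabs_def2 in Hab. change plus with Rplus in Hab. lra.
Qed.

Lemma is_RInt_Cmult (c : C) (f : R -> C) (a b : R) (l : C) :
  is_RInt f a b l -> is_RInt (fun t => (c * f t)%C) a b (c * l)%C.
Proof.
  intros H.
  assert (H1 := is_RInt_fct_extend_fst (U := R_NormedModule) (V := R_NormedModule) f a b l H).
  assert (H2 := is_RInt_fct_extend_snd (U := R_NormedModule) (V := R_NormedModule) f a b l H).
  destruct c as [c1 c2].
  apply (is_RInt_fct_extend_pair (U := R_NormedModule) (V := R_NormedModule)); simpl.
  - apply (is_RInt_minus (V := R_NormedModule)); apply (is_RInt_scal (V := R_NormedModule)); auto.
  - apply (is_RInt_plus (V := R_NormedModule)); apply (is_RInt_scal (V := R_NormedModule)); auto.
Qed.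

Lemma is_RInt_gen_Cmult {Fa Fb : (R -> Prop) -> Prop} {FFa : Filter Fa} {FFb : Filter Fb}
    (c : C) (f : R -> C) (l : C) :
  is_RInt_gen f Fa Fb l -> is_RInt_gen (fun t => (c * f t)%C) Fa Fb (c * l)%C.
Proof.
  intros H P HP.
  assert (Hc : continuous (fun v : C => (c * v)%C) l)
    by (apply continuous_Cmult; [apply continuous_const | apply continuous_id]).
  assert (Hf := H _ (Hc P HP)). unfold filtermapi in *. revert Hf.
  apply filter_imp. intros ab [y [Hy HPy]].
  exists (c * y)%C. split; [apply is_RInt_Cmult |]; assumption.
Qed.

Lemma is_RInt_gen_Re {Fa Fb : (R -> Prop) -> Prop} {FFa : Filter Fa} {FFb : Filter Fb}
    (f : R -> C) (l : C) :
  is_RInt_gen f Fa Fb l -> is_RInt_gen (fun t => Re (f t)) Fa Fb (Re l).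
Proof.
  intros H P HP.
  assert (Hc : continuous (fun v : C => Re v) l).
  { intros Q [e He]. exists e. intros v [Hv _]. apply He. exact Hv. }
  assert (Hf := H _ (Hc P HP)). unfold filtermapi in *. revert Hf.
  apply filter_imp. intros ab [y [Hy HPy]].
  exists (Re y). split; [| exact HPy].
  apply (is_RInt_fct_extend_fst (U := R_NormedModule) (V := R_NormedModule)). exact Hy.
Qed.

Definition rat_majorant (D a b t : R) : R := D / ((t + a) * (t + b)).

Lemma continuous_rat_majorant (D a b x : R) : 0 < a -> 0 < b -> 0 <= x ->
  continuous (rat_majorant D a b) x.
Proof.
  intros Ha Hb Hx. apply (ex_derive_continuous (K := R_AbsRing) (V := R_NormedModule)).
  unfold rat_majorant. auto_derive. apply Rmult_integral_contrapositive; split; lra.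
Qed.

Lemma filterlim_ln_shift_diff (a b : R) : 0 < a < b ->
  filterlim (fun t => ln (t + a) - ln (t + b)) (Rbar_locally p_infty) (locally 0).
Proof.
  intros Hab. apply filterlim_locally. intros eps.
  exists ((b - a) / eps). intros t Ht. change (Rabs (ln (t + a) - ln (t + b) - 0) < eps).
  assert (Ht0 : 0 < t) by (eapply Rle_lt_trans; [| exact Ht];
    apply Rdiv_le_0_compat; [lra | apply cond_pos]).
  assert (Hmono : ln (t + a) <= ln (t + b)) by (apply ln_le; lra).
  assert (Hgap : ln (t + b) - ln (t + a) <= (b - a) / (t + a)).
  { rewrite <- ln_div by lra. eapply Rle_trans; [apply ln_le_sub_1, Rdiv_lt_0_compat; lra |].
    right. field. lra. }
  assert (Hsmall : (b - a) / (t + a) < eps).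
  { apply Rlt_div_l; [lra |]. apply Rlt_div_l in Ht; [nra | apply cond_pos]. }
  rewrite Rminus_0_r, Rabs_left1; lra.
Qed.

Lemma is_RInt_0oo_rat_majorant (D a b : R) : 0 < a < b ->
  is_RInt_0oo (rat_majorant D a b) (D * ln (b / a) / (b - a)).
Proof.
  intros Hab.
  set (Phi := fun t => D / (b - a) * (ln (t + a) - ln (t + b))).
  assert (HPhi : forall t, 0 <= t -> is_derive Phi t (rat_majorant D a b t)).
  { intros t Ht. unfold Phi, rat_majorant. auto_derive; [lra |]. field. lra. }
  assert (HDPhi : forall t, 0 <= t -> Derive Phi t = rat_majorant D a b t)
    by (intros; apply is_derive_unique; auto).
  assert (Hpos : forall P : R -> Prop, (forall x, 0 < x -> P x) ->
            filter_prod (at_right 0) (Rbar_locally p_infty)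
              (fun ab => forall x, Rmin (fst ab) (snd ab) <= x <= Rmax (fst ab) (snd ab) -> P x)).
  { intros P HP. apply (eventually_0oo (fun a' b' => forall x,
      Rmin a' b' <= x <= Rmax a' b' -> P x) 1 1); [lra |].
    intros a' b' Ha' Hb' x Hx. apply HP.
    rewrite Rmin_left in Hx by lra. lra. }
  apply is_RInt_gen_ext with (Derive Phi).
  { generalize (Hpos (fun x => Derive Phi x = rat_majorant D a b x)
      ltac:(intros; apply HDPhi; lra)).
    apply filter_imp. intros ab H x Hx. apply H. lra. }
  replace (D * ln (b / a) / (b - a)) with (0 - Phi 0)
    by (unfold Phi; rewrite ln_div by lra; rewrite !Rplus_0_l; field; lra).
  apply is_RInt_gen_Derive.
  - apply Hpos. intros x Hx. exists (rat_majorant D a b x). apply HPhi. lra.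
  - apply Hpos. intros x Hx. apply continuous_ext_loc with (rat_majorant D a b).
    + apply (locally_interval _ x 0 p_infty); [simpl; lra | exact I |].
      intros y Hy _. symmetry. apply HDPhi. simpl in Hy. lra.
    + apply continuous_rat_majorant; lra.
  - apply (filterlim_filter_le_1 (F := locally 0)); [apply filter_le_within |].
    apply (ex_derive_continuous (K := R_AbsRing) (V := R_NormedModule)).
    exists (rat_majorant D a b 0). apply HPhi. lra.
  - assert (Hscal : continuous (fun u => D / (b - a) * u) 0)
      by (apply (continuous_mult (K := R_AbsRing)); [apply continuous_const | apply continuous_id]).
    unfold continuous in Hscal; cbv beta in Hscal; rewrite Rmult_0_r in Hscal.
    exact (filterlim_comp _ _ _ _ _ _ _ _ (filterlim_ln_shift_diff a b Hab) Hscal).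
Qed.

(** * Complex derivatives on the upper half-plane *)

Lemma is_derive_C_quadratic (f : C -> C) (z l : C) (K r : R) : 0 < r -> 0 <= K ->
  (forall w, Cmod (w - z) < r -> Cmod (f w - f z - (w - z) * l)%C <= K * Cmod (w - z) ^ 2) ->
  @is_derive C_AbsRing C_NormedModule f z l.
Proof.
  intros Hr HK Hf. split; [apply is_linear_scal_l |].
  intros x Hx. apply (is_filter_lim_locally_unique (V := AbsRing_NormedModule C_AbsRing)) in Hx.
  subst x. intros eps.
  set (s := Rmin r (eps / (K + 1))).
  assert (Hs : 0 < s) by (apply Rmin_pos; [lra | apply Rdiv_lt_0_compat; [apply cond_pos | lra]]).
  exists (mkposreal s Hs). intros w Hw. change (Cmod (w - z)%C < s) in Hw.
  change (Cmod (f w - f z - (w - z) * l)%C <= eps * Cmod (w - z)%C).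
  assert (Hc := Cmod_ge_0 (w - z)%C).
  assert (Hcs : Cmod (w - z)%C * (K + 1) <= eps).
  { apply (Rle_div_r _ _ (K + 1)); [lra |]. generalize (Rmin_r r (eps / (K + 1))). fold s. lra. }
  eapply Rle_trans; [apply Hf; generalize (Rmin_l r (eps / (K + 1))); fold s; lra |].
  rewrite Rmult_comm. simpl. nra.
Qed.

Lemma upper_of_Cmod_lt (z w : C) : Cmod (w - z) < Im z -> upper w.
Proof.
  intros Hw.
  assert (H : Rabs (Im (w - z)%C) < Im z)
    by (generalize (Rmax_Cmod (w - z)%C) (Rmax_r (Rabs (Re (w - z)%C)) (Rabs (Im (w - z)%C)));
        unfold Re, Im in *; lra).
  apply Rabs_def2 in H. unfold upper. destruct w, z; unfold Im in *; simpl in *. lra.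
Qed.

Lemma upper_locally (z : C) : upper z -> @locally (AbsRing_UniformSpace C_AbsRing) z upper.
Proof.
  intros Hz. exists (mkposreal (Im z) Hz). intros w Hw. exact (upper_of_Cmod_lt z w Hw).
Qed.

Lemma derivs_on_unique (U : C -> Prop) (f : C -> C) (g1 g2 : nat -> C -> C) :
  (forall z, U z -> @locally (AbsRing_UniformSpace C_AbsRing) z U) ->
  derivs_on U f g1 -> derivs_on U f g2 -> forall n z, U z -> g1 n z = g2 n z.
Proof.
  intros HU [H01 HS1] [H02 HS2] n. induction n as [|n IH]; intros z Hz.
  - rewrite H01, H02; auto.
  - rewrite <- (is_C_derive_unique _ _ _ (HS2 n z Hz)).
    symmetry. apply is_C_derive_unique, (is_derive_ext_loc (g1 n)); [| apply HS1, Hz].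
    generalize (HU z Hz). apply filter_imp. exact IH.
Qed.

(** * Derivatives of the Laplace transform *)

Definition lap_moment (phi : R -> C) (n : nat) (zeta : C) (t : R) : C :=
  ((Ci * t) ^ n * lap_integrand phi zeta t)%C.

Definition lap_deriv (phi : R -> C) (n : nat) (zeta : C) : C :=
  @RInt_gen C_R_CompleteNormedModule (lap_moment phi n zeta) (at_right 0) (Rbar_locally p_infty).

Lemma Cmod_lap_kernel (t : R) (zeta : C) :
  Cmod (cexp (Ci * t * zeta)%C) = exp (- t * Im zeta).
Proof.
  rewrite Cmod_cexp. f_equal. destruct zeta as [x y]. unfold Re, Im; simpl. ring.
Qed.

Lemma Cmod_lap_moment (phi : R -> C) (n : nat) (zeta : C) (t : R) : 0 <= t ->
  Cmod (lap_moment phi n zeta t) = t ^ n * Cmod (phi t) * exp (- t * Im zeta).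
Proof.
  intros Ht. unfold lap_moment, lap_integrand.
  rewrite !Cmod_mult, Cmod_pow, Cmod_mult, Cmod_Ci, Cmod_R, Cmod_lap_kernel,
    Rmult_1_l, Rabs_right by lra.
  ring.
Qed.

Lemma continuous_lap_kernel (zeta : C) (x : R) :
  continuous (fun t : R => cexp (Ci * t * zeta)%C) x.
Proof.
  apply continuous_pair_C; apply (ex_derive_continuous (K := R_AbsRing) (V := R_NormedModule));
    unfold cexp, Re, Im; simpl; auto_derive; auto.
Qed.

Lemma continuous_lap_moment (phi : R -> C) (n : nat) (zeta : C) (x : R) :
  continuous phi x -> continuous (lap_moment phi n zeta) x.
Proof.
  intros Hphi. unfold lap_moment, lap_integrand.
  apply continuous_Cmult; [| apply continuous_Cmult; [exact Hphi | apply continuous_lap_kernel]].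
  apply continuous_Cpow, continuous_Cmult; [apply continuous_const |].
  apply continuous_RtoC, continuous_id.
Qed.

Lemma mq_pos (M : nat -> R) (n : nat) : weight_seq M -> 0 < mq M n.
Proof. intros [HM _]. apply Rdiv_lt_0_compat; apply HM. Qed.

Lemma mq_le_succ (M : nat -> R) (n : nat) : weight_seq M -> mq M n <= mq M (S n).
Proof.
  intros [HM [_ [Hlc _]]].
  assert (H := Hlc (S n) ltac:(lia)). simpl in H. rewrite Nat.sub_0_r in H.
  generalize (HM n) (HM (S n)) (HM (S (S n))). intros.
  unfold mq.
  replace (M (S n) / M n) with (M (S n) ^ 2 / (M n * M (S n))) by (field; lra).
  replace (M (S (S n)) / M (S n)) with (M n * M (S (S n)) / (M n * M (S n))) by (field; lra).
  apply Rmult_le_compat_r; [apply Rlt_le, Rinv_0_lt_compat; nra | exact H].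
Qed.

Lemma Cmod_le_CMh_bound (M : nat -> R) (h B : R) (phi : R -> C) (t : R) :
  weight_seq M -> CMh_bound M h phi B -> 0 < t -> Cmod (phi t) <= B.
Proof.
  intros [_ [HM0 _]] [_ Hb] Ht. generalize (Hb O t Ht). simpl. rewrite HM0. lra.
Qed.

Lemma CMh_bound_nonneg (M : nat -> R) (h B : R) (phi : R -> C) :
  weight_seq M -> CMh_bound M h phi B -> 0 <= B.
Proof.
  intros HM Hb. generalize (Cmod_le_CMh_bound M h B phi 1 HM Hb Rlt_0_1) (Cmod_ge_0 (phi 1)). lra.
Qed.

(* The bounds on P, t P and t^2 P serve for t <= a, a < t <= b / 2 and b / 2 < t respectively. *)
Lemma three_regime_bound (P t a b c0 c1 c2 : R) : 0 <= P -> 0 < t -> 0 < a -> 2 * a <= b ->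
  P <= c0 -> t * P <= c1 -> t ^ 2 * P <= c2 -> c0 * a = c1 -> c1 * b = 2 * c2 ->
  P * ((t + a) * (t + b)) <= 3 * c1 * b.
Proof.
  intros HP Ht Ha Hab H0 H1 H2 E1 E2.
  destruct (Rle_dec t a); [| destruct (Rle_dec (2 * t) b)].
  - assert (P * ((t + a) * (t + b)) <= P * (3 * a * b)) by (apply Rmult_le_compat_l; nra).
    assert (P * a <= c0 * a) by (apply Rmult_le_compat_r; lra). nra.
  - assert (P * ((t + a) * (t + b)) <= P * (3 * t * b)) by (apply Rmult_le_compat_l; nra). nra.
  - assert (P * ((t + a) * (t + b)) <= P * (6 * t ^ 2)) by (apply Rmult_le_compat_l; nra). nra.
Qed.

Section MomentMajorant.

Variables (M : nat -> R) (h B : R).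

Hypotheses (HM : weight_seq M) (Hh : 0 < h).

Definition maj_lo (n : nat) : R := h * mq M n.

Definition maj_hi (n : nat) : R := 2 * h * mq M (S n).

Definition maj_coef (n : nat) : R := 3 * (B * h ^ S n * M (S n)) * maj_hi n.

Definition moment_majorant (n : nat) : R -> R := rat_majorant (maj_coef n) (maj_lo n) (maj_hi n).

Definition moment_bound (n : nat) : R :=
  maj_coef n * ln (maj_hi n / maj_lo n) / (maj_hi n - maj_lo n).

Lemma maj_lo_hi (n : nat) : 0 < maj_lo n /\ 2 * maj_lo n <= maj_hi n.
Proof.
  assert (H1 := mq_pos M n HM). assert (H2 := mq_le_succ M n HM).
  unfold maj_lo, maj_hi. split; nra.
Qed.

Lemma continuous_moment_majorant (n : nat) (x : R) : 0 <= x -> continuous (moment_majorant n) x.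
Proof. intros Hx. destruct (maj_lo_hi n). apply continuous_rat_majorant; lra. Qed.

Lemma is_RInt_0oo_moment_majorant (n : nat) : is_RInt_0oo (moment_majorant n) (moment_bound n).
Proof. destruct (maj_lo_hi n). apply is_RInt_0oo_rat_majorant. lra. Qed.

Lemma moment_le_majorant (phi : R -> C) (n : nat) (t : R) : CMh_bound M h phi B -> 0 < t ->
  t ^ n * Cmod (phi t) <= moment_majorant n t.
Proof.
  intros [_ Hb] Ht. destruct (maj_lo_hi n) as [Hlo Hhi].
  assert (HMp := proj1 HM).
  unfold moment_majorant, rat_majorant.
  apply (Rle_div_r (t ^ n * Cmod (phi t))); [apply Rmult_lt_0_compat; lra |].
  unfold maj_coef.
  apply (three_regime_bound _ t _ _ (B * h ^ n * M n) _ (B * h ^ S (S n) * M (S (S n))));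
    try lra.
  - apply Rmult_le_pos; [apply pow_le; lra | apply Cmod_ge_0].
  - apply Hb. exact Ht.
  - generalize (Hb (S n) t Ht). simpl. lra.
  - generalize (Hb (S (S n)) t Ht). simpl. lra.
  - unfold maj_lo, mq. simpl. field. generalize (HMp n). lra.
  - unfold maj_hi, mq. simpl. field. generalize (HMp (S n)). lra.
Qed.

Lemma moment_bound_le (C0 H : R) (n : nat) : 0 <= B -> 0 < C0 -> 1 < H -> cond_sm M C0 H ->
  moment_bound n <= 6 * h * (1 + C0 * H) * B * (H * h) ^ n * M (S n).
Proof.
  intros HB HC0 HH Hsm. destruct (maj_lo_hi n) as [Hlo Hhi].
  assert (Hc1 : 0 <= B * h ^ S n * M (S n))
    by (apply Rmult_le_pos; [apply Rmult_le_pos; [exact HB | apply pow_le; lra] |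
                             apply Rlt_le, (proj1 HM)]).
  assert (Hratio : 1 <= mq M (S n) / mq M n)
    by (apply Rle_div_r; [apply mq_pos, HM | rewrite Rmult_1_l; apply mq_le_succ, HM]).
  assert (Hln : 0 <= ln (maj_hi n / maj_lo n) <= (1 + C0 * H) * H ^ n).
  { replace (maj_hi n / maj_lo n) with (2 * (mq M (S n) / mq M n))
      by (unfold maj_hi, maj_lo; field; split; [apply Rgt_not_eq, mq_pos, HM | lra]).
    rewrite ln_mult by lra.
    assert (0 <= ln (mq M (S n) / mq M n)) by (rewrite <- ln_1; apply ln_le; lra).
    assert (0 <= ln 2 <= 1).
    { split; [rewrite <- ln_1; apply ln_le; lra |].
      rewrite <- (ln_exp 1). apply ln_le; [lra |]. generalize (exp_ineq1_le 1). lra. }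
    assert (1 <= H ^ n) by (apply pow_R1_Rle; lra).
    generalize (Hsm n). simpl. nra. }
  unfold moment_bound, maj_coef.
  apply (Rle_trans _ (6 * (B * h ^ S n * M (S n)) * ln (maj_hi n / maj_lo n))).
  - apply Rle_div_l; [lra |]. assert (0 <= B * h ^ S n * M (S n) * ln (maj_hi n / maj_lo n))
      by (apply Rmult_le_pos; lra). nra.
  - assert (Hc : 0 <= 6 * h * (B * h ^ n * M (S n))).
    { apply Rmult_le_pos; [lra |]. apply Rmult_le_pos; [apply Rmult_le_pos |];
        [exact HB | apply pow_le; lra | apply Rlt_le, (proj1 HM)]. }
    replace (6 * (B * h ^ S n * M (S n)) * ln (maj_hi n / maj_lo n))
      with (6 * h * (B * h ^ n * M (S n)) * ln (maj_hi n / maj_lo n)) by (simpl; ring).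
    replace (6 * h * (1 + C0 * H) * B * (H * h) ^ n * M (S n))
      with (6 * h * (B * h ^ n * M (S n)) * ((1 + C0 * H) * H ^ n))
      by (rewrite Rpow_mult_distr; ring).
    apply Rmult_le_compat_l; [exact Hc | apply Hln].
Qed.

End MomentMajorant.

Section LaplaceDerivatives.

Variables (M : nat -> R) (h B : R) (phi : R -> C).

Hypotheses (HM : weight_seq M) (Hh : 0 < h) (Hphi : CMh_bound M h phi B).

Lemma lap_deriv_spec (n : nat) (z : C) : 0 <= Im z ->
  is_RInt_0oo (lap_moment phi n z) (lap_deriv phi n z) /\
  Cmod (lap_deriv phi n z) <= moment_bound M h B n.
Proof.
  intros Hz.
  destruct (is_RInt_0oo_dominated (V := C_R_CompleteNormedModule) (lap_moment phi n z)
    (moment_majorant M h B n) (moment_bound M h B n)) as [l [Hl Hlb]].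
  - intros x Hx. apply continuous_lap_moment, (proj1 Hphi), Hx.
  - intros x Hx. apply continuous_moment_majorant; [exact HM | exact Hh | lra].
  - intros x Hx. rewrite <- Cmod_norm, Cmod_lap_moment by lra.
    eapply Rle_trans; [| exact (moment_le_majorant M h B HM Hh phi n x Hphi Hx)].
    rewrite <- (Rmult_1_r (x ^ n * Cmod (phi x))) at 2.
    apply Rmult_le_compat_l;
      [apply Rmult_le_pos; [apply pow_le; lra | apply Cmod_ge_0] |].
    rewrite <- exp_0. apply exp_le_compat. nra.
  - apply is_RInt_0oo_moment_majorant; assumption.
  - rewrite <- Cmod_norm in Hlb.
    replace (lap_deriv phi n z) with l
      by (symmetry; apply (is_RInt_gen_unique (V := C_R_CompleteNormedModule)), Hl).
    split; assumption.
Qed.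

Lemma lap_moment_remainder_eq (n : nat) (z w : C) (t : R) :
  (lap_moment phi n w t - lap_moment phi n z t - (w - z) * lap_moment phi (S n) z t)%C
  = (lap_moment phi n z t * (cexp (Ci * t * (w - z)) - 1 - Ci * t * (w - z)))%C.
Proof.
  unfold lap_moment, lap_integrand. rewrite Cpow_S.
  replace (Ci * t * w)%C with (Ci * t * z + Ci * t * (w - z))%C by ring.
  rewrite cexp_plus. ring.
Qed.

Lemma lap_moment_remainder_le (n : nat) (z w : C) (t : R) : 0 < t -> Cmod (w - z) <= Im z ->
  Cmod (lap_moment phi n w t - lap_moment phi n z t - (w - z) * lap_moment phi (S n) z t)%C
  <= 4 * Cmod (w - z) ^ 2 * moment_majorant M h B (S (S n)) t.
Proof.
  intros Ht Hwz. set (d := (w - z)%C) in *.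
  rewrite lap_moment_remainder_eq, Cmod_mult, Cmod_lap_moment by lra. fold d.
  assert (Htaylor := Cmod_cexp_taylor_1 (Ci * t * d)%C).
  rewrite !Cmod_mult, Cmod_Ci, Cmod_R, Rmult_1_l, Rabs_right in Htaylor by lra.
  assert (Hmaj := moment_le_majorant M h B HM Hh phi (S (S n)) t Hphi Ht).
  assert (Hexp : exp (- t * Im z) * exp (t * Cmod d) <= 1)
    by (rewrite <- exp_plus, <- exp_0; apply exp_le_compat; nra).
  set (A := t ^ n * Cmod (phi t)).
  assert (HA : 0 <= A) by (apply Rmult_le_pos; [apply pow_le; lra | apply Cmod_ge_0]).
  replace (t ^ S (S n) * Cmod (phi t)) with (t ^ 2 * A) in Hmaj by (unfold A; simpl; ring).
  assert (0 <= exp (- t * Im z)) by apply Rlt_le, exp_pos.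
  eapply Rle_trans; [apply Rmult_le_compat_l; [apply Rmult_le_pos; assumption | exact Htaylor] |].
  replace (A * exp (- t * Im z) * (4 * (t * Cmod d) ^ 2 * exp (t * Cmod d)))
    with (4 * Cmod d ^ 2 * (t ^ 2 * A) * (exp (- t * Im z) * exp (t * Cmod d))) by ring.
  assert (0 <= 4 * Cmod d ^ 2 * (t ^ 2 * A)).
  { apply Rmult_le_pos; [apply Rmult_le_pos; [lra | apply pow2_ge_0] |].
    apply Rmult_le_pos; [apply pow2_ge_0 | exact HA]. }
  assert (0 <= Cmod d ^ 2) by apply pow2_ge_0.
  nra.
Qed.

Lemma lap_deriv_taylor (n : nat) (z w : C) : 0 < Im z -> Cmod (w - z) < Im z ->
  Cmod (lap_deriv phi n w - lap_deriv phi n z - (w - z) * lap_deriv phi (S n) z)%C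
  <= 4 * Cmod (w - z) ^ 2 * moment_bound M h B (S (S n)).
Proof.
  intros Hz Hwz.
  assert (Hw : 0 <= Im w) by (apply Rlt_le, (upper_of_Cmod_lt z w Hwz)).
  destruct (lap_deriv_spec n w Hw) as [Iw _].
  destruct (lap_deriv_spec n z ltac:(lra)) as [Iz _].
  destruct (lap_deriv_spec (S n) z ltac:(lra)) as [Iz' _].
  set (k := 4 * Cmod (w - z) ^ 2).
  destruct (is_RInt_0oo_dominated (V := C_R_CompleteNormedModule)
    (fun t => lap_moment phi n w t - lap_moment phi n z t - (w - z) * lap_moment phi (S n) z t)%C
    (fun t => k * moment_majorant M h B (S (S n)) t) (k * moment_bound M h B (S (S n))))
    as [l [Hl Hlb]].
  - intros x Hx. assert (Hc := proj1 Hphi x Hx).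
    apply continuous_Cminus; [apply continuous_Cminus; apply continuous_lap_moment, Hc |].
    apply continuous_Cmult; [apply continuous_const | apply continuous_lap_moment, Hc].
  - intros x Hx. apply (continuous_mult (K := R_AbsRing)); [apply continuous_const |].
    apply continuous_moment_majorant; [exact HM | exact Hh | lra].
  - intros t Ht. rewrite <- Cmod_norm. apply lap_moment_remainder_le; lra.
  - apply (is_RInt_gen_scal (V := R_NormedModule) _ k), is_RInt_0oo_moment_majorant;
      assumption.
  - assert (Hrem : is_RInt_0oo
      (fun t => lap_moment phi n w t - lap_moment phi n z t - (w - z) * lap_moment phi (S n) z t)%C
      (lap_deriv phi n w - lap_deriv phi n z - (w - z) * lap_deriv phi (S n) z)%C).
    { apply (is_RInt_gen_minus (V := C_R_NormedModule));
        [apply (is_RInt_gen_minus (V := C_R_NormedModule)) | apply is_RInt_gen_Cmult];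
        assumption. }
    rewrite <- Cmod_norm in Hlb.
    rewrite <- (is_RInt_gen_unique (V := C_R_CompleteNormedModule) _ _ Hrem).
    rewrite (is_RInt_gen_unique (V := C_R_CompleteNormedModule) _ _ Hl). exact Hlb.
Qed.

Lemma is_derive_lap_deriv (n : nat) (z : C) : upper z ->
  @is_derive C_AbsRing C_NormedModule (lap_deriv phi n) z (lap_deriv phi (S n) z).
Proof.
  intros Hz. unfold upper in Hz.
  apply (is_derive_C_quadratic _ _ _ (4 * moment_bound M h B (S (S n))) (Im z) Hz).
  - destruct (lap_deriv_spec (S (S n)) z ltac:(lra)) as [_ Hb].
    generalize (Cmod_ge_0 (lap_deriv phi (S (S n)) z)). lra.
  - intros w Hw. rewrite Rmult_assoc, (Rmult_comm _ (Cmod _ ^ 2)), <- Rmult_assoc.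
    apply lap_deriv_taylor; assumption.
Qed.

Lemma derivs_on_Laplace : derivs_on upper (Laplace phi) (lap_deriv phi).
Proof.
  split; [| exact is_derive_lap_deriv].
  intros z Hz. unfold lap_deriv, Laplace.
  apply (RInt_gen_ext (V := C_R_CompleteNormedModule)
    (Fa := at_right 0) (Fb := Rbar_locally p_infty)).
  - apply filter_forall. intros. apply Cmult_1_l.
  - exists (lap_deriv phi 0 z). apply lap_deriv_spec. unfold upper in Hz. lra.
Qed.

Lemma Laplace_defined_of_CMh_bound : Laplace_defined phi.
Proof.
  intros zeta Hz. apply (ex_RInt_gen_ext_eq (lap_moment phi 0 zeta)); [intros; apply Cmult_1_l |].
  exists (lap_deriv phi 0 zeta). apply lap_deriv_spec. unfold upper in Hz. lra.
Qed.

End LaplaceDerivatives.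

Lemma Cmod_Laplace_derivs_le (M : nat -> R) (C0 H h B : R) (phi : R -> C) (g : nat -> C -> C) :
  weight_seq M -> 0 < C0 -> 1 < H -> cond_sm M C0 H -> 0 < h -> CMh_bound M h phi B ->
  derivs_on upper (Laplace phi) g ->
  forall p z, upper z -> Cmod (g p z) <= 6 * h * (1 + C0 * H) * B * (H * h) ^ p * M (S p).
Proof.
  intros HM HC0 HH Hsm Hh Hb Hg p z Hz.
  rewrite (derivs_on_unique upper _ _ _ upper_locally Hg
    (derivs_on_Laplace M h B phi HM Hh Hb) p z Hz).
  eapply Rle_trans; [apply (lap_deriv_spec M h B phi HM Hh Hb p z); unfold upper in Hz; lra |].
  apply moment_bound_le; [exact HM | exact Hh | | assumption..].
  exact (CMh_bound_nonneg M h B phi HM Hb).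
Qed.

Lemma Laplace_in_ANh (M : nat -> R) (C0 H h : R) (phi : R -> C) :
  weight_seq M -> 0 < C0 -> 1 < H -> cond_sm M C0 H -> 0 < h -> in_CMh M h phi ->
  in_ANh (shift1 M) (H * h) (Laplace phi).
Proof.
  intros HM HC0 HH Hsm Hh [B Hb]. exists (lap_deriv phi).
  split; [exact (derivs_on_Laplace M h B phi HM Hh Hb) |].
  exists (6 * h * (1 + C0 * H) * B). intros p z Hz.
  exact (Cmod_Laplace_derivs_le M C0 H h B phi _ HM HC0 HH Hsm Hh Hb
    (derivs_on_Laplace M h B phi HM Hh Hb) p z Hz).
Qed.

(** * Injectivity *)

Definition peak (x0 t : R) : R := t / x0 * exp (1 - t / x0).

Lemma peak_pow (x0 t : R) (k : nat) : 0 < x0 ->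
  peak x0 t ^ k = (exp 1 / x0) ^ k * (t ^ k * exp (- t * (INR k / x0))).
Proof.
  intros Hx. unfold peak. rewrite Rpow_mult_distr, exp_pow.
  replace (INR k * (1 - t / x0)) with (INR k * 1 + - t * (INR k / x0)) by (field; lra).
  rewrite exp_plus, <- exp_pow. unfold Rdiv. rewrite !Rpow_mult_distr. ring.
Qed.

Lemma peak_pos (x0 t : R) : 0 < x0 -> 0 < t -> 0 < peak x0 t.
Proof. intros. apply Rmult_lt_0_compat; [apply Rdiv_lt_0_compat; assumption | apply exp_pos]. Qed.

Lemma u_exp_le_1 (u : R) : u * exp (1 - u) <= 1.
Proof.
  assert (H := exp_ineq1_le (u - 1)).
  assert (E : exp (u - 1) * exp (1 - u) = 1)
    by (rewrite <- exp_plus, <- exp_0; f_equal; ring).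
  assert (0 < exp (1 - u)) by apply exp_pos. nra.
Qed.

Lemma peak_le_1 (x0 t : R) : peak x0 t <= 1.
Proof. apply u_exp_le_1. Qed.

Lemma continuous_peak (x0 t : R) : 0 < x0 -> continuous (peak x0) t.
Proof.
  intros Hx. apply (ex_derive_continuous (K := R_AbsRing) (V := R_NormedModule)).
  unfold peak. auto_derive. lra.
Qed.

Definition peak_far_bound (d : R) : R := Rmax ((1 + d) * exp (- d)) ((1 - d) * exp d).

Lemma peak_far_bound_range (d : R) : 0 < d < 1 -> 0 < peak_far_bound d < 1.
Proof.
  intros Hd.
  assert (E : exp d * exp (- d) = 1) by (rewrite <- exp_plus, Rplus_opp_r; apply exp_0).
  assert (0 < exp d) by apply exp_pos. assert (0 < exp (- d)) by apply exp_pos.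
  split.
  - eapply Rlt_le_trans; [| apply Rmax_l]. apply Rmult_lt_0_compat; lra.
  - apply Rmax_lub_lt.
    + generalize (exp_ineq1 d ltac:(lra)). nra.
    + generalize (exp_ineq1 (- d) ltac:(lra)). nra.
Qed.

(* On each side of its maximum at u = 1, u e^(1-u) is monotone, so away from 1 it is at most
   its value at 1 +- d. *)
Lemma u_exp_far (u d : R) : 0 < d < 1 -> 0 < u -> d <= Rabs (u - 1) ->
  u * exp (1 - u) <= peak_far_bound d.
Proof.
  intros Hd Hu Hud. unfold peak_far_bound.
  destruct (Rle_dec 1 u) as [H1u | H1u].
  - rewrite Rabs_right in Hud by lra. eapply Rle_trans; [| apply Rmax_l].
    set (v := u / (1 + d)). assert (Hv : 1 <= v) by (apply Rle_div_r; lra).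
    replace u with ((1 + d) * v) by (unfold v; field; lra).
    replace (1 - (1 + d) * v) with ((1 - v) + - (d * v)) by ring.
    rewrite exp_plus.
    replace ((1 + d) * v * (exp (1 - v) * exp (- (d * v))))
      with ((1 + d) * ((v * exp (1 - v)) * exp (- (d * v)))) by ring.
    apply Rmult_le_compat_l; [lra |]. rewrite <- (Rmult_1_l (exp (- d))).
    apply Rmult_le_compat; [apply Rmult_le_pos; [lra | apply Rlt_le, exp_pos] |
      apply Rlt_le, exp_pos | apply u_exp_le_1 | apply exp_le_compat; nra].
  - rewrite Rabs_left in Hud by lra. eapply Rle_trans; [| apply Rmax_r].
    set (v := u / (1 - d)). assert (Hv : v <= 1) by (apply Rle_div_l; lra).
    assert (Hv0 : 0 < v) by (apply Rdiv_lt_0_compat; lra).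
    replace u with ((1 - d) * v) by (unfold v; field; lra).
    replace (1 - (1 - d) * v) with ((1 - v) + d * v) by ring.
    rewrite exp_plus.
    replace ((1 - d) * v * (exp (1 - v) * exp (d * v)))
      with ((1 - d) * ((v * exp (1 - v)) * exp (d * v))) by ring.
    apply Rmult_le_compat_l; [lra |]. rewrite <- (Rmult_1_l (exp d)).
    apply Rmult_le_compat; [apply Rmult_le_pos; [lra | apply Rlt_le, exp_pos] |
      apply Rlt_le, exp_pos | apply u_exp_le_1 | apply exp_le_compat; nra].
Qed.

Lemma u_exp_near (u d : R) : 0 < d <= 1 -> Rabs (u - 1) <= d -> 1 - d <= u * exp (1 - u).
Proof.
  intros Hd Hu. apply Rabs_le_between' in Hu.
  assert (H := exp_ineq1_le (1 - u)).
  assert (u * (2 - u) <= u * exp (1 - u)) by (apply Rmult_le_compat_l; lra).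
  nra.
Qed.

Lemma peak_le_rat_majorant (x0 t : R) : 0 < x0 -> 0 < t ->
  peak x0 t <= rat_majorant (3 * exp 1 * (3 * x0 + 1) * (3 * x0 + 2)) 1 2 t.
Proof.
  intros Hx Ht. unfold peak, rat_majorant. set (u := t / x0).
  assert (Hu : 0 < u) by (apply Rdiv_lt_0_compat; assumption).
  assert (Et : t = x0 * u) by (unfold u; field; lra).
  apply (Rle_div_r (u * exp (1 - u))); [apply Rmult_lt_0_compat; lra |].
  (* (1 + u / 3)^3 <= e^u absorbs the cubic growth of u (t + 1) (t + 2). *)
  assert (Hcube : (1 + u / 3) ^ 3 <= exp u).
  { replace (exp u) with (exp (u / 3) ^ 3) by (rewrite exp_pow; f_equal; simpl; field).
    apply pow_incr. split; [lra | apply exp_ineq1_le]. }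
  assert (Q : u * ((t + 1) * (t + 2)) <= 3 * (3 * x0 + 1) * (3 * x0 + 2) * (1 + u / 3) ^ 3).
  { replace (3 * (3 * x0 + 1) * (3 * x0 + 2) * (1 + u / 3) ^ 3) with
      ((3 * (1 + u / 3)) * (((3 * x0 + 1) * (1 + u / 3)) * ((3 * x0 + 2) * (1 + u / 3))))
      by ring.
    apply Rmult_le_compat; [lra | apply Rmult_le_pos; lra | lra |].
    apply Rmult_le_compat; [lra | lra | rewrite Et; nra | rewrite Et; nra]. }
  replace (3 * exp 1 * (3 * x0 + 1) * (3 * x0 + 2))
    with (exp (1 - u) * (3 * (3 * x0 + 1) * (3 * x0 + 2) * exp u))
    by (replace (exp 1) with (exp (1 - u) * exp u) by (rewrite <- exp_plus; f_equal; ring); ring).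
  replace (u * exp (1 - u) * ((t + 1) * (t + 2))) with (exp (1 - u) * (u * ((t + 1) * (t + 2))))
    by ring.
  apply Rmult_le_compat_l; [apply Rlt_le, exp_pos |].
  eapply Rle_trans; [exact Q |]. apply Rmult_le_compat_l; [nra | exact Hcube].
Qed.

Lemma peak_far_le (x0 delta t : R) : 0 < delta < x0 -> 0 < t -> delta <= Rabs (t - x0) ->
  peak x0 t <= peak_far_bound (delta / x0).
Proof.
  intros Hd Ht Htd. apply u_exp_far.
  - split; [apply Rdiv_lt_0_compat | apply Rlt_div_l]; lra.
  - apply Rdiv_lt_0_compat; lra.
  - replace (t / x0 - 1) with ((t - x0) / x0) by (field; lra).
    unfold Rdiv. rewrite Rabs_mult, Rabs_inv, (Rabs_right x0) by lra.
    apply Rmult_le_compat_r; [apply Rlt_le, Rinv_0_lt_compat |]; lra.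
Qed.

Lemma is_RInt_0oo_peak_pow (x0 : R) (k : nat) : 0 < x0 -> (1 <= k)%nat ->
  exists l : C, is_RInt_0oo (fun t => RtoC (peak x0 t ^ k)) l /\
                is_RInt_0oo (fun t => peak x0 t ^ k) (Re l).
Proof.
  intros Hx Hk.
  set (D := 3 * exp 1 * (3 * x0 + 1) * (3 * x0 + 2)).
  destruct (is_RInt_0oo_dominated (V := C_R_CompleteNormedModule)
    (fun t => RtoC (peak x0 t ^ k)) (rat_majorant D 1 2) (D * ln (2 / 1) / (2 - 1)))
    as [l [Hl _]].
  - intros x _. apply continuous_RtoC, continuous_pow, continuous_peak, Hx.
  - intros x Hx0. apply continuous_rat_majorant; lra.
  - intros x Hx0. rewrite <- Cmod_norm, Cmod_R.
    assert (H1 := peak_pos x0 x Hx Hx0). assert (H2 := peak_le_1 x0 x).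
    rewrite Rabs_right by (apply Rle_ge, pow_le; lra).
    eapply Rle_trans; [apply pow_le_base; [lra | exact Hk] |].
    apply peak_le_rat_majorant; assumption.
  - apply is_RInt_0oo_rat_majorant. lra.
  - exists l. split; [exact Hl |]. exact (is_RInt_gen_Re _ _ Hl).
Qed.

Lemma peak_pow_mass_ge (x0 d I : R) (k : nat) : 0 < x0 -> 0 < d < 1 ->
  is_RInt_0oo (fun t => peak x0 t ^ k) I -> 2 * x0 * d * (1 - d) ^ k <= I.
Proof.
  intros Hx Hd HI.
  assert (Hcont : forall t, continuous (fun t => peak x0 t ^ k) t)
    by (intros; apply continuous_pow, continuous_peak, Hx).
  eapply Rle_trans;
    [| apply (RInt_le_is_RInt_0oo (fun t => peak x0 t ^ k) I (x0 * (1 - d)) (x0 * (1 + d)));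
         [intros; apply Hcont | | exact HI | split; nra]].
  - replace (2 * x0 * d * (1 - d) ^ k)
      with (RInt (fun _ => (1 - d) ^ k) (x0 * (1 - d)) (x0 * (1 + d)))
      by (rewrite RInt_const; unfold scal; simpl; unfold mult; simpl; ring).
    apply RInt_le; [nra | apply ex_RInt_const |
      apply (ex_RInt_continuous (V := R_CompleteNormedModule)); intros; apply Hcont |].
    intros t Ht. apply pow_incr. split; [lra |]. apply u_exp_near; [lra |].
    replace (t / x0 - 1) with ((t - x0) / x0) by (field; lra).
    unfold Rdiv. rewrite Rabs_mult, Rabs_inv, (Rabs_right x0) by lra.
    apply Rle_div_l; [lra |]. apply Rabs_le. nra.
  - intros t Ht. apply pow_le, Rlt_le, peak_pos; assumption.
Qed.

Lemma weighted_deviation_bound (w v : R -> R) (psi : R -> C) (c : C) (lw : C)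
    (eps K Iw Iv : R) :
  (forall t, 0 < t -> continuous w t) -> (forall t, 0 < t -> continuous v t) ->
  (forall t, 0 < t -> continuous psi t) -> (forall t, 0 < t -> 0 <= w t) ->
  is_RInt_0oo (fun t => RtoC (w t)) lw -> is_RInt_0oo w Iw -> is_RInt_0oo v Iv ->
  is_RInt_0oo (fun t => RtoC (w t) * psi t)%C (RtoC 0) ->
  (forall t, 0 < t -> w t * Cmod (c - psi t) <= eps * w t + K * v t) ->
  Cmod (c * lw) <= eps * Iw + K * Iv.
Proof.
  intros Hw Hv Hpsi Hw0 Hlw HIw HIv Horth Hdev.
  assert (Hint : is_RInt_0oo (fun t => c * RtoC (w t) - RtoC (w t) * psi t)%C (c * lw - RtoC 0)%C)
    by exact (is_RInt_gen_minus (V := C_R_NormedModule) _ _ _ _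
                (is_RInt_gen_Cmult c _ _ Hlw) Horth).
  destruct (is_RInt_0oo_dominated (V := C_R_CompleteNormedModule)
    (fun t => c * RtoC (w t) - RtoC (w t) * psi t)%C (fun t => eps * w t + K * v t)
    (eps * Iw + K * Iv)) as [l [Hl Hlb]].
  - intros t Ht. apply continuous_Cminus; apply continuous_Cmult;
      try apply continuous_RtoC; try apply continuous_const; auto.
  - intros t Ht. apply (continuous_plus (V := R_NormedModule));
      apply (continuous_mult (K := R_AbsRing)); auto; apply continuous_const.
  - intros t Ht. rewrite <- Cmod_norm.
    replace (c * RtoC (w t) - RtoC (w t) * psi t)%C with (RtoC (w t) * (c - psi t))%C by ring.
    rewrite Cmod_mult, Cmod_R, Rabs_right by (apply Rle_ge, Hw0, Ht). apply Hdev, Ht.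
  - exact (is_RInt_gen_plus (V := R_NormedModule) _ _ _ _
      (is_RInt_gen_scal (V := R_NormedModule) _ eps _ HIw)
      (is_RInt_gen_scal (V := R_NormedModule) _ K _ HIv)).
  - rewrite <- Cmod_norm in Hlb.
    replace (c * lw)%C with (c * lw - RtoC 0)%C by ring.
    rewrite <- (is_RInt_gen_unique (V := C_R_CompleteNormedModule) _ _ Hint).
    rewrite (is_RInt_gen_unique (V := C_R_CompleteNormedModule) _ _ Hl). exact Hlb.
Qed.

(* Near x0 the deviation of psi is small; far from x0 all but one factor of peak^k are at most
   peak_far_bound, leaving the integrable weight peak. *)
Lemma peak_pow_deviation_le (psi : R -> C) (x0 A eps delta : R) (k : nat) :
  0 < eps -> 0 < delta < x0 -> (1 <= k)%nat -> (forall t, 0 < t -> Cmod (psi t) <= A) ->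
  (forall t, Rabs (t - x0) < delta -> Cmod (psi t - psi x0) < eps) ->
  forall t, 0 < t -> peak x0 t ^ k * Cmod (psi x0 - psi t)
    <= eps * peak x0 t ^ k + 2 * A * peak_far_bound (delta / x0) ^ (k - 1) * peak x0 t.
Proof.
  intros Heps Hd Hk HA Hnear t Ht.
  assert (Hp := peak_pos x0 t ltac:(lra) Ht). assert (Hp1 := peak_le_1 x0 t).
  assert (Hpk : 0 <= peak x0 t ^ k) by (apply pow_le; lra).
  assert (Hgap := peak_far_bound_range (delta / x0)
    ltac:(split; [apply Rdiv_lt_0_compat | apply Rlt_div_l]; lra)).
  assert (0 <= 2 * A * peak_far_bound (delta / x0) ^ (k - 1) * peak x0 t).
  { assert (0 <= A) by (generalize (HA t Ht) (Cmod_ge_0 (psi t)); lra).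
    apply Rmult_le_pos; [apply Rmult_le_pos; [lra | apply pow_le; lra] | lra]. }
  destruct (Rlt_le_dec (Rabs (t - x0)) delta) as [Hlt | Hge].
  - assert (Cmod (psi x0 - psi t) <= eps)
      by (rewrite <- Cmod_opp; replace (- (psi x0 - psi t))%C with (psi t - psi x0)%C by ring;
          apply Rlt_le, Hnear, Hlt).
    assert (peak x0 t ^ k * Cmod (psi x0 - psi t) <= peak x0 t ^ k * eps)
      by (apply Rmult_le_compat_l; assumption).
    lra.
  - assert (Hdev : Cmod (psi x0 - psi t) <= 2 * A).
    { eapply Rle_trans; [apply Cmod_triangle |]. rewrite Cmod_opp.
      generalize (HA x0 ltac:(lra)) (HA t Ht). lra. }
    assert (Hfar := peak_far_le x0 delta t Hd Ht Hge).
    replace k with (S (k - 1)) at 1 by lia. simpl.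
    assert (peak x0 t ^ (k - 1) <= peak_far_bound (delta / x0) ^ (k - 1)) by (apply pow_incr; lra).
    assert (0 <= peak x0 t ^ (k - 1)) by (apply pow_le; lra).
    assert (0 <= Cmod (psi x0 - psi t)) by apply Cmod_ge_0.
    assert (0 <= eps * peak x0 t ^ k) by (apply Rmult_le_pos; lra).
    assert (peak x0 t ^ (k - 1) * Cmod (psi x0 - psi t)
            <= peak_far_bound (delta / x0) ^ (k - 1) * (2 * A))
      by (apply Rmult_le_compat; lra).
    nra.
Qed.

Lemma peak_concentration (psi : R -> C) (x0 A : R) : 0 < x0 ->
  (forall t, 0 < t -> continuous psi t) -> (forall t, 0 < t -> Cmod (psi t) <= A) ->
  (forall k, (1 <= k)%nat -> is_RInt_0oo (fun t => RtoC (peak x0 t ^ k) * psi t)%C (RtoC 0)) ->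
  psi x0 = RtoC 0.
Proof.
  intros Hx Hpsi HA Horth. apply Cmod_eq_0, Rle_antisym; [| apply Cmod_ge_0].
  apply le_epsilon. intros e He. set (eps := e / 2).
  assert (Heps : 0 < eps) by (unfold eps; lra).
  destruct (continuous_Cmod_delta psi x0 eps (Hpsi x0 Hx) Heps) as [dl [Hdl Hnear]].
  set (delta := Rmin dl (x0 / 2)).
  assert (Hdelta : 0 < delta < x0)
    by (unfold delta; split; [apply Rmin_pos | generalize (Rmin_r dl (x0 / 2))]; lra).
  assert (Hgap := peak_far_bound_range (delta / x0)
    ltac:(split; [apply Rdiv_lt_0_compat | apply Rlt_div_l]; lra)).
  set (rho := peak_far_bound (delta / x0)) in *. set (sg := (1 + rho) / 2).
  destruct (is_RInt_0oo_peak_pow x0 1 Hx (le_n 1)) as [l1 [_ HI1]].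
  assert (HI1' : is_RInt_0oo (peak x0) (Re l1))
    by (revert HI1; apply is_RInt_gen_ext, filter_forall; intros; apply pow_1).
  assert (HI1pos : 0 <= Re l1).
  { generalize (peak_pow_mass_ge x0 (1 / 2) (Re l1) 1 Hx ltac:(lra) HI1). simpl. nra. }
  assert (HA0 : 0 <= A) by (generalize (HA x0 Hx) (Cmod_ge_0 (psi x0)); lra).
  destruct (exists_pow_ratio_small rho sg (2 * A * Re l1) (eps * (2 * x0 * (1 - sg))))
    as [k [Hk Hsmall]];
    [unfold sg; lra | apply Rmult_le_pos; lra | apply Rmult_lt_0_compat; unfold sg; nra |].
  destruct (is_RInt_0oo_peak_pow x0 k Hx Hk) as [lk [Hlk HIk]].
  assert (Hmass := peak_pow_mass_ge x0 (1 - sg) (Re lk) k Hx ltac:(unfold sg; lra) HIk).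
  replace (1 - (1 - sg)) with sg in Hmass by ring.
  assert (Hw := weighted_deviation_bound (fun t => peak x0 t ^ k) (peak x0) psi (psi x0) lk eps
    (2 * A * rho ^ (k - 1)) (Re lk) (Re l1)
    ltac:(intros; apply continuous_pow, continuous_peak, Hx)
    ltac:(intros; apply continuous_peak, Hx) Hpsi
    ltac:(intros; apply pow_le, Rlt_le, peak_pos; assumption) Hlk HIk HI1' (Horth k Hk)
    (peak_pow_deviation_le psi x0 A eps delta k Heps Hdelta Hk HA
      ltac:(intros t Ht; apply Hnear; generalize (Rmin_l dl (x0 / 2)); unfold delta in Ht; lra))).
  assert (Hsg : 0 < sg ^ k) by (apply pow_lt; unfold sg; lra).
  assert (HIkpos : 0 < Re lk) by (eapply Rlt_le_trans; [| exact Hmass];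
    apply Rmult_lt_0_compat; [unfold sg; nra | exact Hsg]).
  rewrite Cmod_mult in Hw.
  assert (Hre : Cmod (psi x0) * Re lk <= Cmod (psi x0) * Cmod lk)
    by (apply Rmult_le_compat_l; [apply Cmod_ge_0 |];
        generalize (re_le_Cmod lk) (Rle_abs (Re lk)); lra).
  assert (Hfinal : Cmod (psi x0) * Re lk <= (2 * eps) * Re lk) by nra.
  apply Rmult_le_reg_r in Hfinal; [unfold eps in Hfinal; lra | exact HIkpos].
Qed.

Lemma lap_kernel_imag (t s : R) : cexp (Ci * t * (Ci * s))%C = RtoC (exp (- t * s)).
Proof.
  rewrite <- cexp_RtoC. f_equal. unfold Cmult, Ci, RtoC; simpl. f_equal; ring.
Qed.

Lemma peak_moment_eq (phi : R -> C) (x0 t : R) (k : nat) : 0 < x0 ->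
  (RtoC (peak x0 t ^ k) * phi t)%C
  = (RtoC ((exp 1 / x0) ^ k) * (- Ci) ^ k * lap_moment phi k (Ci * (INR k / x0)%R) t)%C.
Proof.
  intros Hx. unfold lap_moment, lap_integrand. rewrite lap_kernel_imag, peak_pow by exact Hx.
  rewrite Cpow_mult_l, <- RtoC_pow, !RtoC_mult.
  replace ((- Ci) ^ k)%C with (/ Ci ^ k)%C
    by (rewrite <- Cpow_inv by (intros E; injection E; lra); f_equal;
        unfold Cinv, Copp, Ci; simpl; f_equal; field).
  field. apply Cpow_nz. intros E. injection E. lra.
Qed.

Lemma Laplace_eq_peak_moments (M : nat -> R) (phi1 phi2 : R -> C) (h1 h2 B1 B2 x0 : R)
    (k : nat) :
  weight_seq M -> 0 < h1 -> CMh_bound M h1 phi1 B1 -> 0 < h2 -> CMh_bound M h2 phi2 B2 ->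
  (forall z, upper z -> Laplace phi1 z = Laplace phi2 z) -> 0 < x0 -> (1 <= k)%nat ->
  is_RInt_0oo (fun t => RtoC (peak x0 t ^ k) * (phi1 t - phi2 t))%C (RtoC 0).
Proof.
  intros HM Hh1 Hb1 Hh2 Hb2 HL Hx Hk.
  set (z := (Ci * (INR k / x0)%R)%C).
  assert (Hz : upper z).
  { unfold upper, z, Im; simpl. rewrite Rmult_0_l, Rplus_0_l, Rmult_1_l.
    apply Rdiv_lt_0_compat; [apply lt_0_INR; lia | exact Hx]. }
  assert (D1 := derivs_on_Laplace M h1 B1 phi1 HM Hh1 Hb1).
  assert (D2 : derivs_on upper (Laplace phi1) (lap_deriv phi2)).
  { destruct (derivs_on_Laplace M h2 B2 phi2 HM Hh2 Hb2) as [D20 D2S].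
    split; [intros w Hw; rewrite D20, HL; auto | exact D2S]. }
  assert (Heq := derivs_on_unique upper _ _ _ upper_locally D1 D2 k z Hz).
  destruct (lap_deriv_spec M h1 B1 phi1 HM Hh1 Hb1 k z ltac:(unfold upper in Hz; lra))
    as [I1 _].
  destruct (lap_deriv_spec M h2 B2 phi2 HM Hh2 Hb2 k z ltac:(unfold upper in Hz; lra))
    as [I2 _].
  set (c := (RtoC ((exp 1 / x0) ^ k) * (- Ci) ^ k)%C).
  assert (HC : is_RInt_0oo (fun t => c * (lap_moment phi1 k z t - lap_moment phi2 k z t))%C
                 (c * (lap_deriv phi1 k z - lap_deriv phi2 k z))%C)
    by exact (is_RInt_gen_Cmult c _ _ (is_RInt_gen_minus (V := C_R_NormedModule) _ _ _ _ I1 I2)).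
  replace (c * (lap_deriv phi1 k z - lap_deriv phi2 k z))%C with (RtoC 0) in HC
    by (rewrite Heq; ring).
  revert HC. apply is_RInt_gen_ext, filter_forall. intros ab t _.
  match goal with |- ?a = ?b => change (@eq C a b) end. symmetry.
  transitivity (RtoC (peak x0 t ^ k) * phi1 t - RtoC (peak x0 t ^ k) * phi2 t)%C; [ring |].
  rewrite !peak_moment_eq by exact Hx. unfold c, z. ring.
Qed.

Lemma Laplace_injective_CM (M : nat -> R) (phi1 phi2 : R -> C) : weight_seq M ->
  in_CM M phi1 -> in_CM M phi2 -> (forall z, upper z -> Laplace phi1 z = Laplace phi2 z) ->
  forall x, 0 < x -> phi1 x = phi2 x.
Proof.
  intros HM [h1 [Hh1 [B1 Hb1]]] [h2 [Hh2 [B2 Hb2]]] HL x Hx.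
  assert (Hzero : (phi1 x - phi2 x)%C = RtoC 0).
  { apply (peak_concentration (fun t => phi1 t - phi2 t)%C x (B1 + B2) Hx).
    - intros t Ht. apply continuous_Cminus; [apply (proj1 Hb1) | apply (proj1 Hb2)]; exact Ht.
    - intros t Ht. eapply Rle_trans; [apply Cmod_triangle |]. rewrite Cmod_opp.
      generalize (Cmod_le_CMh_bound M h1 B1 phi1 t HM Hb1 Ht)
                 (Cmod_le_CMh_bound M h2 B2 phi2 t HM Hb2 Ht). lra.
    - intros k Hk. exact (Laplace_eq_peak_moments M phi1 phi2 h1 h2 B1 B2 x k
        HM Hh1 Hb1 Hh2 Hb2 HL Hx Hk). }
  replace (phi1 x) with ((phi1 x - phi2 x) + phi2 x)%C by ring. rewrite Hzero. ring.
Qed.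

Theorem lemma2p12 (M : nat -> R) (C0 H : R) :
  weight_seq M -> 0 < C0 -> 1 < H -> cond_sm M C0 H ->
  (forall h : R, 0 < h ->
     (* L(C_{M,h}) is defined and contained in A_{M_{+1},Hh}(H) *)
     (forall phi, in_CMh M h phi ->
        Laplace_defined phi /\ in_ANh (shift1 M) (H * h) (Laplace phi)) /\
     (* continuity (boundedness of the linear map) *)
     (exists K : R, 0 <= K /\
        forall (phi : R -> C) (B : R), CMh_bound M h phi B ->
        forall g, derivs_on upper (Laplace phi) g ->
        forall (p : nat) (z : C), upper z ->
          Cmod (g p z) <= K * B * (H * h) ^ p * shift1 M p)) /\
  (* L : C_{M}(0,oo) -> A_{M_{+1}}(H) well-defined *)
  (forall phi, in_CM M phi -> Laplace_defined phi /\ in_AN (shift1 M) (Laplace phi)) /\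
  (* injectivity *)
  (forall phi1 phi2, in_CM M phi1 -> in_CM M phi2 ->
     (forall z, upper z -> Laplace phi1 z = Laplace phi2 z) ->
     forall x, 0 < x -> phi1 x = phi2 x).
Proof.
  intros HM HC0 HH Hsm.
  assert (HCMh : forall h phi, 0 < h -> in_CMh M h phi ->
            Laplace_defined phi /\ in_ANh (shift1 M) (H * h) (Laplace phi)).
  { intros h phi Hh Hphi. split; [| exact (Laplace_in_ANh M C0 H h phi HM HC0 HH Hsm Hh Hphi)].
    destruct Hphi as [B Hb]. exact (Laplace_defined_of_CMh_bound M h B phi HM Hh Hb). }
  split; [| split].
  - intros h Hh. split; [intros phi; exact (HCMh h phi Hh) |].
    exists (6 * h * (1 + C0 * H)). split; [apply Rmult_le_pos; nra |].
    intros phi B Hb g Hg p z Hz.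
    exact (Cmod_Laplace_derivs_le M C0 H h B phi g HM HC0 HH Hsm Hh Hb Hg p z Hz).
  - intros phi [h [Hh Hphi]]. destruct (HCMh h phi Hh Hphi) as [Hdef Hin].
    split; [exact Hdef |]. exists (H * h). split; [nra | exact Hin].
  - intros phi1 phi2. exact (Laplace_injective_CM M phi1 phi2 HM).
Qed.
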